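(* Let $A$ be a set of $n$ real numbers, let $\delta_0 \ge 0$, and let $\ell_1, \dots, \ell_K$ be lines in $\mathbb{R}^2$ of the form $y = \lambda_i x + \mu_i$ with $\lambda_i \neq 0$, each of which satisfies $|\ell_i \cap (A \times A)| \ge n^{1-\delta_0}$. Then at least $K^2 n^{-2\delta_0}/2$ of the ordered pairs $(i,j) \in \{1,\dots,K\}^2$ satisfy $$|Y(\ell_i) \cap Y(\ell_j)| \ge n^{1-2\delta_0}/2.$$
   Context: For a line $\ell$, $Y(\ell)$ denotes the projection of $\ell \cap (A \times A)$ onto the $y$-axis, i.e. $Y(\ell) = \{ y : (x,y) \in \ell \cap (A\times A) \text{ for some } x\}$. *)

From HB Require Import structures.
From mathcomp Require Import all_boot all_order all_algebra.
From mathcomp Require Import reals exp.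
Set Implicit Arguments. Unset Strict Implicit. Unset Printing Implicit Defensive.
Import Order.TTheory GRing.Theory Num.Theory.
Local Open Scope ring_scope.

Definition line_pts (R : realType) (A : seq R) (lam mu : R) : seq (R * R) :=
  [seq p <- [seq (x, y) | x <- A, y <- A] | p.2 == lam * p.1 + mu].

Definition Yproj (R : realType) (A : seq R) (lam mu : R) : seq R :=
  undup [seq p.2 | p <- line_pts A lam mu].

Definition card_inter (R : realType) (s t : seq R) : nat :=
  size [seq y <- s | y \in t].

(* Let f a be the number of sets Y(l_i) containing a.  Double counting gives
   sum_(i,j) |Y(l_i) ∩ Y(l_j)| = sum_a (f a)^2 and sum_a f a = sum_i |Y(l_i)|;
   since lam_i <> 0, the projection l_i ∩ (A x A) -> Y(l_i) is injective, so
   |Y(l_i)| >= n q with q = n^-d0.  Cauchy-Schwarz over the n elements of A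
   then bounds the first sum below by K^2 n q^2.  A pair contributes at most n
   if its intersection is large and less than n q^2 / 2 otherwise, so the
   number M of large pairs satisfies K^2 n q^2 <= M n + K^2 n q^2 / 2. *)
From HB Require Import structures.
From mathcomp Require Import all_boot all_order all_algebra.
From mathcomp Require Import reals exp.
From mathcomp Require Import lra.
Set Implicit Arguments. Unset Strict Implicit. Unset Printing Implicit Defensive.
Import Order.TTheory GRing.Theory Num.Theory.
Local Open Scope ring_scope.

Lemma sqr_sum_le_size_mul (F : realFieldType) (T : Type) (r : seq T) (c : T -> F) :
  (\sum_(x <- r) c x) ^+ 2 <= (size r)%:R * \sum_(x <- r) c x ^+ 2.
Proof.
elim: r => [|x r IH]; first by rewrite !big_nil expr0n mul0r.
rewrite !big_cons -natr1.
set S := \sum_(y <- r) c y in IH *; set Q := \sum_(y <- r) c y ^+ 2 in IH *.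
set n := (size r)%:R in IH *.
have Q_ge0 : 0 <= Q by apply: sumr_ge0 => y _; exact: sqr_ge0.
have [n0|n_gt0] := eqVneq n 0.
  have S0 : S = 0 by apply/eqP; rewrite -sqrf_eq0 eq_le sqr_ge0 andbT -(mul0r Q) -n0.
  by rewrite S0 n0; nra.
have {}n_gt0 : 0 < n by rewrite lt_def n_gt0 ler0n.
(* 2 n c S <= n^2 c^2 + S^2 <= n (n c^2 + Q), then divide by n. *)
have cross : 2 * S * c x <= Q + n * c x ^+ 2.
  rewrite -(ler_pM2l n_gt0); have := sqr_ge0 (S - n * c x); nra.
nra.
Qed.

Lemma natr_count_subset {F : numDomainType} (T : eqType) (A s : seq T) (p : pred T) :
  uniq A -> uniq s -> {subset s <= A} ->
  (count p s)%:R = \sum_(a <- A) ((a \in s) && p a)%:R :> F.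
Proof.
move=> uA us sA.
have sA_perm : perm_eq [seq a <- A | a \in s] s.
  apply: uniq_perm => [||x]; [exact: filter_uniq | exact: us |].
  by rewrite mem_filter andb_idr //; exact: sA.
rewrite -(permP sA_perm) count_filter -sum1_count natr_sum big_mkcond /=.
by apply: eq_bigr => a _; rewrite andbC; case: (_ && _).
Qed.

Lemma sum_le_card_split (F : numDomainType) (X : finType) (P : {set X})
    (f : X -> F) (B T : F) :
  0 <= T -> (forall x, x \in P -> f x <= B) -> (forall x, x \notin P -> f x <= T) ->
  \sum_x f x <= #|P|%:R * B + #|X|%:R * T.
Proof.
move=> T_ge0 fP fNP.
have pointwise x : f x <= (x \in P)%:R * B + T.
  have [xP|xNP] := boolP (x \in P); last by rewrite mul0r add0r fNP.
  by rewrite mul1r ler_wpDr // fP.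
apply: le_trans (ler_sum _ (fun x _ => pointwise x)) _.
have card_P : \sum_x (x \in P)%:R = #|P|%:R :> F.
  by rewrite -sum1_card natr_sum [RHS]big_mkcond; apply: eq_bigr => x _; case: (x \in P).
by rewrite big_split /= -mulr_suml card_P sumr_const [_ * T]mulr_natl.
Qed.

Section LargePairwiseIntersections.

Variables (F : realFieldType) (T : eqType) (I : finType).
Variables (A : seq T) (Y : I -> seq T) (q : F).
Hypotheses (A_uniq : uniq A) (A_gt0 : (0 < size A)%N) (q_ge0 : 0 <= q).
Hypotheses (Y_uniq : forall i, uniq (Y i)) (Y_subset : forall i, {subset Y i <= A}).
Hypothesis Y_large : forall i, (size A)%:R * q <= (size (Y i))%:R.

Local Notation n := ((size A)%:R : F).
Local Notation inter i j := (size [seq y <- Y i | y \in Y j]).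
Let mult a : F := \sum_i (a \in Y i)%:R.

Lemma sum_size_eq_sum_mult : \sum_i (size (Y i))%:R = \sum_(a <- A) mult a.
Proof.
rewrite exchange_big; apply: eq_bigr => i _.
rewrite -count_predT (natr_count_subset _ A_uniq (Y_uniq i) (@Y_subset i)).
by apply: eq_bigr => a _; rewrite andbT.
Qed.

Lemma sum_inter_eq_sum_sqr_mult :
  \sum_(ij : I * I) (inter ij.1 ij.2)%:R = \sum_(a <- A) mult a ^+ 2.
Proof.
under eq_bigr => ij _ do
  rewrite size_filter (natr_count_subset _ A_uniq (Y_uniq ij.1) (@Y_subset ij.1)).
rewrite exchange_big; apply: eq_bigr => a _.
rewrite expr2 big_distrlr pair_bigA /=; apply: eq_bigr => ij _.
by rewrite -natrM mulnb.
Qed.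

Lemma inter_le_size i j : (inter i j <= size A)%N.
Proof.
rewrite size_filter (leq_trans (count_size _ _)) //.
exact: uniq_leq_size (Y_uniq i) (@Y_subset i).
Qed.

Theorem many_large_pairwise_intersections :
  #|I|%:R ^+ 2 * q ^+ 2 / 2 <=
  #|[set ij : I * I | n * q ^+ 2 / 2 <= (inter ij.1 ij.2)%:R]|%:R.
Proof.
set good := [set ij | _]; set P := \sum_(ij : I * I) ((inter ij.1 ij.2)%:R : F).
have n_gt0 : 0 < n by rewrite ltr0n.
have lower : (#|I|%:R * (n * q)) ^+ 2 <= n * P.
  rewrite /P sum_inter_eq_sum_sqr_mult.
  apply: le_trans (sqr_sum_le_size_mul _ _); rewrite -sum_size_eq_sum_mult.
  rewrite ler_sqr ?nnegrE; last 2 first.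
  - by rewrite !mulr_ge0 // ltW.
  - by rewrite sumr_ge0.
  by rewrite mulr_natl -sumr_const; apply: ler_sum => i _.
have upper : P <= #|good|%:R * n + #|I|%:R ^+ 2 * (n * q ^+ 2 / 2).
  have -> : #|I|%:R ^+ 2 = #|{: I * I}|%:R :> F by rewrite card_prod natrM expr2.
  apply: sum_le_card_split => [|ij _|ij]; rewrite ?inE.
  - by rewrite divr_ge0 // mulr_ge0 ?sqr_ge0 // ltW.
  - by rewrite ler_nat inter_le_size.
  - by rewrite -ltNge => /ltW.
have bound := le_trans lower (ler_wpM2l (ltW n_gt0) upper).
by rewrite -(ler_pM2l (mulr_gt0 n_gt0 n_gt0)); lra.
Qed.

End LargePairwiseIntersections.

Lemma line_pts_uniq (R : realType) (A : seq R) (lam mu : R) :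
  uniq A -> uniq (line_pts A lam mu).
Proof.
move=> A_uniq; apply/filter_uniq/allpairs_uniq => //.
by move=> [? ?] [? ?] _ _ [-> ->].
Qed.

Lemma Yproj_subset (R : realType) (A : seq R) (lam mu : R) :
  {subset Yproj A lam mu <= A}.
Proof.
move=> y; rewrite mem_undup => /mapP [p].
by rewrite mem_filter => /andP [_ /allpairsP [[x y'] [_ y'A ->]]] ->.
Qed.

Lemma size_Yproj (R : realType) (A : seq R) (lam mu : R) :
  uniq A -> lam != 0 -> size (Yproj A lam mu) = size (line_pts A lam mu).
Proof.
move=> A_uniq lam_neq0; rewrite /Yproj undup_id ?size_map //.
rewrite map_inj_in_uniq ?line_pts_uniq // => -[x y] [x' y'].
rewrite !mem_filter /= => /andP [/eqP -> _] /andP [/eqP -> _] eq_y.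
by rewrite (mulfI lam_neq0 (addIr _ eq_y)).
Qed.

Lemma powR_1B (R : realType) (x a : R) : 0 < x -> x `^ (1 - a) = x * x `^ (- a).
Proof. by move=> x_gt0; rewrite powRD ?powRr1 ?ltW // (gt_eqF x_gt0) implybT. Qed.

Theorem lemma1 (R : realType) (A : seq R) (d0 : R) (K : nat)
    (lam mu : 'I_K -> R) :
  uniq A -> (0 < size A)%N -> 0 <= d0 ->
  (forall i, lam i != 0) ->
  (forall i, powR (size A)%:R (1 - d0) <= (size (line_pts A (lam i) (mu i)))%:R) ->
  (K%:R ^+ 2 * powR (size A)%:R (- (2 * d0)) / 2 <=
   (#|[set ij : 'I_K * 'I_K |
       powR (size A)%:R (1 - 2 * d0) / 2 <=
       (card_inter (Yproj A (lam ij.1) (mu ij.1))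
                   (Yproj A (lam ij.2) (mu ij.2)))%:R]|)%:R).
Proof.
move=> A_uniq A_gt0 _ lam_neq0 line_large.
have N_gt0 : 0 < (size A)%:R :> R by rewrite ltr0n.
set q := (size A)%:R `^ (- d0).
have powR_2d0 : (size A)%:R `^ (- (2 * d0)) = q ^+ 2.
  by rewrite -powR_mulrn ?powR_ge0 // -powRrM mulNr mulrC.
rewrite powR_1B // powR_2d0.
have := many_large_pairwise_intersections (Y := fun i => Yproj A (lam i) (mu i))
  (q := q) A_uniq A_gt0 (powR_ge0 _ _) (fun i => undup_uniq _)
  (fun i => @Yproj_subset R A _ _).
rewrite card_ord; apply=> i.
by rewrite size_Yproj // -powR_1B.
Qed.
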